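(* Let $(\Lambda,d)$ be a $k$-graph and let $p\in\mathbb{N}^k$. For each $n\in\mathbb{N}^k$ with $n\le p$ and all vertices $v,w$ of $p\Lambda$ (i.e. $v,w\in\Lambda^p$), there is at most one path $\lambda$ in $p\Lambda$ with $d_p(\lambda)=n$, $r_p(\lambda)=v$ and $s_p(\lambda)=w$.
   Context: A $k$-graph is a pair $(\Lambda,d)$ where $\Lambda$ is a countable category and $d:\Lambda\to\mathbb{N}^k$ is a functor satisfying the factorisation property: if $d(\lambda)=m+n$ then there are unique $\mu\in d^{-1}(m)$, $\nu\in d^{-1}(n)$ with $\lambda=\mu\nu$. $\Lambda^n:=d^{-1}(n)$. For $d(\lambda)=n$ and $l\le m\le n$, $\lambda(l,m)$ is the unique path of degree $m-l$ with $\lambda=\lambda(0,l)\lambda(l,m)\lambda(m,n)$. The dual $k$-graph $p\Lambda$ has paths $\{\lambda\in\Lambda:d(\lambda)\ge p\}$, vertices $\Lambda^p$, range $r_p(\lambda)=\lambda(0,p)$, source $s_p(\lambda)=\lambda(d(\lambda)-p,d(\lambda))$, composition $\lambda\circ_p\mu=\lambda\,\mu(p,d(\mu))$ when $s_p(\lambda)=r_p(\mu)$, and degree $d_p(\lambda)=d(\lambda)-p$. *)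

From mathcomp Require Import all_boot.
Set Implicit Arguments. Unset Strict Implicit. Unset Printing Implicit Defensive.

(** Elements of N^k are functions 'I_k -> nat; equality, sum, order and
    (truncated) difference are pointwise. *)
Definition nk (k : nat) := 'I_k -> nat.
Definition eqk k (m n : nk k) : Prop := forall i, m i = n i.
Definition addk k (m n : nk k) : nk k := fun i => m i + n i.
Definition subk k (m n : nk k) : nk k := fun i => m i - n i.
Definition lek k (m n : nk k) : Prop := forall i, m i <= n i.
Definition zerok (k : nat) : nk k := fun _ => 0.

(** A k-graph: a countable category (objects, morphisms, source/range,
    identities, composition defined when [src l = rng m], composition
    written [comp l m] = "l m" with l after m) with a degree functor
    d : Lambda -> N^k satisfying the unique factorisation property. *)
Record kgraph (k : nat) := KGraph {
  Obj : countType;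
  Mor : countType;
  src : Mor -> Obj;
  rng : Mor -> Obj;
  idm : Obj -> Mor;
  comp : Mor -> Mor -> Mor;
  deg : Mor -> nk k;
  src_idm : forall v, src (idm v) = v;
  rng_idm : forall v, rng (idm v) = v;
  src_comp : forall l m, src l = rng m -> src (comp l m) = src m;
  rng_comp : forall l m, src l = rng m -> rng (comp l m) = rng l;
  comp_idl : forall l, comp (idm (rng l)) l = l;
  comp_idr : forall l, comp l (idm (src l)) = l;
  compA : forall l m n, src l = rng m -> src m = rng n ->
    comp l (comp m n) = comp (comp l m) n;
  deg_idm : forall v, eqk (deg (idm v)) (@zerok k);
  deg_comp : forall l m, src l = rng m ->
    eqk (deg (comp l m)) (addk (deg l) (deg m));
  factorisation_ex : forall l (m n : nk k), eqk (deg l) (addk m n) ->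
    exists mu nu, [/\ src mu = rng nu, l = comp mu nu,
                      eqk (deg mu) m & eqk (deg nu) n];
  factorisation_uniq : forall l (m n : nk k) mu nu mu' nu',
    eqk (deg mu) m -> eqk (deg nu) n -> src mu = rng nu -> l = comp mu nu ->
    eqk (deg mu') m -> eqk (deg nu') n -> src mu' = rng nu' -> l = comp mu' nu' ->
    mu = mu' /\ nu = nu'
}.

Section Segments.
Variables (k : nat) (L : kgraph k).

(** [seg lam l m s] : s is lam(l,m), i.e. l <= m <= d(lam) and s is the
    (unique, by factorisation) path of degree m - l with
    lam = lam(0,l) lam(l,m) lam(m,d(lam)). *)
Definition seg (lam : Mor L) (l m : nk k) (s : Mor L) : Prop :=
  lek l m /\ lek m (deg lam) /\
  exists a b, [/\ src a = rng s, src s = rng b,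
                  lam = comp a (comp s b),
                  eqk (deg a) l
                  & eqk (deg s) (subk m l) /\ eqk (deg b) (subk (deg lam) m)].

Definition dual_path (p : nk k) (lam : Mor L) : Prop := lek p (deg lam).
Definition dual_vertex (p : nk k) (v : Mor L) : Prop := eqk (deg v) p.
Definition dual_rng_is (p : nk k) (lam v : Mor L) : Prop :=
  seg lam (@zerok k) p v.
Definition dual_src_is (p : nk k) (lam w : Mor L) : Prop :=
  seg lam (subk (deg lam) p) (deg lam) w.
Definition dual_deg (p : nk k) (lam : Mor L) : nk k := subk (deg lam) p.

End Segments.

(** By the factorisation property, [r_p(lam) = v] and [s_p(lam) = w] say that
    [lam = v b] and [lam = a w] with [d(a) = d(b) = d_p(lam)].  Factor
    [v = v1 v2] with [d(v1) = d_p(lam)]; then [lam = v1 (v2 b) = a w], and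
    uniqueness of factorisation forces [a = v1].  Hence [lam = v1 w], where
    [v1] only depends on [v] and the degree [n], so two such paths coincide. *)
From Pilot Require Import Defs.
From mathcomp Require Import all_boot.
Set Implicit Arguments. Unset Strict Implicit.

Section Factorisation.
Variables (k : nat) (L : kgraph k).
Implicit Types (x y a b lam s v w : Mor L) (m p : nk k).

Lemma comp_inj_deg x y x' y' :
  src x = rng y -> src x' = rng y' -> Defs.comp x y = Defs.comp x' y' ->
  eqk (deg x) (deg x') -> x = x' /\ y = y'.
Proof.
move=> xy x'y' e dx.
have dy : eqk (deg y') (deg y).
  move=> i; apply: (@addnI (deg x i)).
  by rewrite -[_ + deg y i](deg_comp xy) e (deg_comp x'y') /addk dx.
exact: (factorisation_uniq (m := deg x) (n := deg y) _ _ xy erefl _ dy x'y' e).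
Qed.

Lemma deg0_idm a :
  eqk (deg a) (@zerok k) -> a = idm (rng a) /\ idm (src a) = a.
Proof.
move=> a0; apply: comp_inj_deg; rewrite ?src_idm ?rng_idm //.
  by rewrite comp_idl comp_idr.
by move=> i; rewrite a0 deg_idm.
Qed.

Lemma comp_deg0l a x :
  eqk (deg a) (@zerok k) -> src a = rng x -> Defs.comp a x = x.
Proof.
move=> a0 ax; have [ea ea'] := deg0_idm a0.
have ra : rng a = rng x by rewrite -ax -{1}ea' rng_idm.
by rewrite ea ra comp_idl.
Qed.

Lemma comp_deg0r b x :
  eqk (deg b) (@zerok k) -> src x = rng b -> Defs.comp x b = x.
Proof.
move=> b0 xb; have [eb eb'] := deg0_idm b0.
have sb : src b = src x by rewrite xb {1}eb src_idm.
by rewrite -eb' sb comp_idr.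
Qed.

Lemma seg_prefix lam m s :
  seg lam (@zerok k) m s ->
  exists2 b, src s = rng b /\ lam = Defs.comp s b & eqk (deg b) (subk (deg lam) m).
Proof.
move=> [_ [_ [a [b [as_ sb -> a0 [_ db]]]]]].
exists b => //; split=> //; apply: comp_deg0l => //.
by rewrite as_ (rng_comp sb).
Qed.

Lemma seg_suffix lam m s :
  seg lam (subk (deg lam) m) (deg lam) s ->
  exists2 a, src a = rng s /\ lam = Defs.comp a s & eqk (deg a) (subk (deg lam) m).
Proof.
move=> [_ [_ [a [b [as_ sb e da [_ db]]]]]].
have b0 : eqk (deg b) (@zerok k) by move=> i; rewrite db /subk subnn.
by exists a; rewrite // e (comp_deg0r b0 sb).
Qed.

Lemma dual_path_eq_comp p lam v w v1 v2 :
  dual_rng_is p lam v -> dual_src_is p lam w ->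
  src v1 = rng v2 -> v = Defs.comp v1 v2 -> eqk (deg v1) (dual_deg p lam) ->
  lam = Defs.comp v1 w.
Proof.
move=> /seg_prefix[b [vb lam_vb] _] /seg_suffix[a [aw lam_aw] da] v12 ev dv1.
have v2b : src v2 = rng b by rewrite -vb ev (src_comp v12).
have v1_v2b : src v1 = rng (Defs.comp v2 b) by rewrite (rng_comp v2b).
have e : Defs.comp a w = Defs.comp v1 (Defs.comp v2 b).
  by rewrite -lam_aw lam_vb ev (Defs.compA v12 v2b).
have da_v1 : eqk (deg a) (deg v1) by move=> i; rewrite da dv1.
have [a_v1 _] := comp_inj_deg aw v1_v2b e da_v1.
by rewrite lam_aw a_v1.
Qed.

End Factorisation.

Theorem lemma3p7 (k : nat) (L : kgraph k) (p n : nk k) (v w : Mor L) :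
  lek n p -> dual_vertex (L:=L) p v -> dual_vertex (L:=L) p w ->
  forall lam mu : Mor L,
    dual_path (L:=L) p lam -> dual_path (L:=L) p mu ->
    eqk (dual_deg (L:=L) p lam) n -> eqk (dual_deg (L:=L) p mu) n ->
    dual_rng_is (L:=L) p lam v -> dual_rng_is (L:=L) p mu v ->
    dual_src_is (L:=L) p lam w -> dual_src_is (L:=L) p mu w ->
    lam = mu.
Proof.
move=> np dv _ lam mu _ _ dlam dmu rlam rmu slam smu.
have [v1 [v2 [v12 ev dv1 _]]] : exists v1 v2,
    [/\ src v1 = rng v2, v = Defs.comp v1 v2,
        eqk (deg v1) n & eqk (deg v2) (subk p n)].
  by apply: factorisation_ex => i; rewrite dv /addk /subk subnKC.
have dv1_lam : eqk (deg v1) (dual_deg p lam) by move=> i; rewrite dv1 dlam.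
have dv1_mu : eqk (deg v1) (dual_deg p mu) by move=> i; rewrite dv1 dmu.
by rewrite (dual_path_eq_comp rlam slam v12 ev dv1_lam)
           (dual_path_eq_comp rmu smu v12 ev dv1_mu).
Qed.
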